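(* Let $\mathbf B\in\mathbb R_+^{m\times n}$, $\mathbf d\in\mathbb R^n_+$ and $\mathcal J\subseteq[m]$. For $\mathbf h\in\mathbb R^m_+$ let $z(\mathbf h)=\min_{\mathbf y\ge\mathbf 0}\{\mathbf d^T\mathbf y \mid \mathbf B\mathbf y\ge\mathbf h\}$, and for $\mathcal W\subseteq[m]$ write $z(\mathcal W)=z(\sum_{i\in\mathcal W}\mathbf e_i)$. Suppose there exist $\gamma>0$ and $w_i\in(0,1]$ for all $i\in\mathcal J$ such that: (1) for all $i\in\mathcal J$, $\dfrac{z(\mathbf e_i)}{w_i}>4\gamma\cdot\dfrac{\log n}{\log\log n}$; (2) for all $\mathcal W\subseteq\mathcal J$, $\sum_{i\in\mathcal W}w_i\le 1$ implies $z(\mathcal W)\le\gamma$. Then $z(\mathcal J)\le 4\gamma\cdot\dfrac{\log n}{\log\log n}$.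
   Context: $\mathbf e_i$ denotes the $i$-th standard basis vector of $\mathbb R^m$; $n$ is the number of columns of $\mathbf B$. *)

From HB Require Import structures.
From mathcomp Require Import all_boot all_order all_algebra.
From mathcomp Require Import all_classical all_reals all_analysis.
Set Implicit Arguments. Unset Strict Implicit. Unset Printing Implicit Defensive.
Import Order.TTheory GRing.Theory Num.Theory.
Local Open Scope ring_scope.
Local Open Scope classical_set_scope.

(* z(h) = min_{y >= 0} { d^T y | B y >= h }, as an extended real
   (infimum over the feasible set; +oo if infeasible; the LP minimum is
   attained whenever feasible since the objective is bounded below). *)
Definition lpval (R : realType) (m n : nat) (B : 'M[R]_(m, n)) (d : 'cV[R]_n)
  (h : 'cV[R]_m) : \bar R :=
  ereal_inf [set ((d^T *m y) 0 0)%:E | y in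
    [set y : 'cV[R]_n | (forall j, 0 <= y j 0) /\ (forall i, h i 0 <= (B *m y) i 0)]].

Definition ebasis (R : realType) (m : nat) (i : 'I_m) : 'cV[R]_m := delta_mx i 0.

Definition lpvalset (R : realType) (m n : nat) (B : 'M[R]_(m, n)) (d : 'cV[R]_n)
  (W : {set 'I_m}) : \bar R :=
  lpval B d (\sum_(i in W) ebasis R i).

From HB Require Import structures.
From mathcomp Require Import all_boot all_order all_algebra.
From mathcomp Require Import all_classical all_reals all_analysis.
From mathcomp Require Import ring lra.

Set Implicit Arguments.
Unset Strict Implicit.
Unset Printing Implicit Defensive.
Import Order.TTheory GRing.Theory Num.Theory.
Local Open Scope ring_scope.

(* Write K = 4 g ln n / ln ln n and suppose z(J) > K.  For every positive
   weighting pi of the columns some row i of J then satisfies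
   K * sum_j pi_j B_ij / d_j < sum_j pi_j: otherwise K pi_j / (d_j sum pi) is a
   cover of J of cost at most K.  Feeding the weights pi_j = exp (lam load_j)
   to this observation, a multiplicative-weights greedy repeatedly adds such a
   row i, with weight c_i = z(e_i) in (K w_i, g], until the total weight C lies
   in (K - g, K].  Since exp (lam x) <= 1 + (e^lam - 1) x on [0, 1], the
   potential sum_j exp (lam load_j) stays below n exp (theta C), with
   theta = (e^lam - 1) / K, so every column load is at most
   M = (ln n + theta C) / lam.  The rows used form a set W with
   sum_W w_i <= C / K <= 1, hence z(W) <= g; but their multiplicities times
   c_i / M form a feasible dual solution, so z(W) >= C / M, and C / M > g for
   lam = ln (ln n / ln ln n). *)

Section RealFacts.
Variable R : realType.

Lemma expR1_lt3 : expR (1 : R) < 3.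
Proof.
have sixth_le : expR (6^-1 : R) <= 6 / 5.
  rewrite -[6^-1 : R]opprK expRN -[6 / 5 : R]invf_div lef_pV2 ?posrE ?expR_gt0 //.
  by apply: le_trans (expR_ge1Dx _); lra.
have -> : expR (1 : R) = expR (6^-1) ^+ 6 by rewrite -expRM_natl mulfV.
apply: le_lt_trans (_ : (6 / 5) ^+ 6 < 3); last by rewrite !exprS expr0; lra.
by rewrite lerXn2r ?nnegrE ?expR_ge0 //; lra.
Qed.

Lemma ln_le_subr1 (x : R) : 0 < x -> ln x <= x - 1.
Proof.
by move=> x_gt0; have := @le_ln1Dx R (x - 1); rewrite addrCA subrr addr0; apply; lra.
Qed.

Lemma ln_le_half (x : R) : 0 < x -> ln x <= x / 2.
Proof.
move=> x_gt0; have e_ge2 : 2 <= expR (1 : R) by apply: le_trans (expR_ge1Dx _); lra.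
have := ln_le_subr1 (divr_gt0 x_gt0 (expR_gt0 1)).
rewrite ln_div ?posrE ?expR_gt0 // expRK.
suff : x / expR 1 <= x / 2 by lra.
by rewrite ler_pdivrMr ?expR_gt0 // mulrAC ler_pdivlMr //; nra.
Qed.

Lemma ln_nat_gt1 n : (2 < n)%N -> 1 < ln (n%:R : R).
Proof.
move=> n_gt2; have n_ge3 : (3 : R) <= n%:R by rewrite ler_nat.
have n_gt0 : (0 : R) < n%:R by lra.
rewrite -[X in X < _]expRK ltr_ln ?posrE ?expR_gt0 //.
exact: lt_le_trans expR1_lt3 n_ge3.
Qed.

Lemma ln_div_lnE (l : R) : 1 < l -> ln (l / ln l) = ln l - ln (ln l).
Proof. by move=> l_gt1; rewrite ln_div ?posrE ?ln_gt0 //; lra. Qed.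

Lemma ln_div_ln_ge1 (l : R) : 1 < l -> 1 <= ln (l / ln l).
Proof.
by move=> l_gt1; rewrite ln_div_lnE //; have := ln_le_subr1 (ln_gt0 l_gt1); lra.
Qed.

Lemma ln_div_ln_mul_ge (l : R) : 1 < l -> l <= 2 * ln (l / ln l) * (l / ln l).
Proof.
move=> l_gt1; have u_gt0 := ln_gt0 l_gt1.
have : ln l <= 2 * ln (l / ln l) by rewrite ln_div_lnE //; have := ln_le_half u_gt0; lra.
rewrite -(ler_pM2r (_ : 0 < l / ln l)) ?divr_gt0 //; last lra.
by rewrite mulrCA divff ?gt_eqF // mulr1.
Qed.

Lemma rounding_gap (g l L lam C : R) : 0 < g -> 1 <= lam -> 1 <= L ->
  l <= 2 * lam * L -> 4 * g * L - g < C -> C <= 4 * g * L ->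
  g * (l + (L - 1) / (4 * g * L) * C) < lam * C.
Proof.
move=> g_gt0 lam_ge1 L_ge1 l_le C_gt C_le.
have -> : g * (l + (L - 1) / (4 * g * L) * C) = g * l + (L - 1) / (4 * L) * C.
  by field; apply/andP; split; apply: lt0r_neq0; lra.
have t_le : (L - 1) / (4 * L) <= 1 / 4 by rewrite ler_pdivrMr; lra.
have t_ge0 : 0 <= (L - 1) / (4 * L) by apply: divr_ge0; lra.
have C_gt3 : 3 * g * L < C by nra.
have gl_le : g * l <= 2 * g * (lam * L) by nra.
nra.
Qed.

End RealFacts.

Lemma expR_le_chord (R : realType) (a x : R) : 0 <= x -> x <= 1 ->
  expR (x * a) <= 1 + (expR a - 1) * x.
Proof.
move=> x_ge0 x_le1; have := @convex_expR R (Itv01 x_ge0 x_le1) a 0.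
rewrite !convRE /= expR0 mulr0 addr0 mulr1 /unstable.onem; lra.
Qed.

Lemma exists_lbound_gt0 (R : realFieldType) (T : finType) (A : {set T}) (f : T -> R) :
  (forall i, i \in A -> 0 < f i) -> exists2 eps, 0 < eps & forall i, i \in A -> eps <= f i.
Proof.
move=> f_gt0; have S_ge0 : 0 <= \sum_(i in A) (f i)^-1.
  by apply: sumr_ge0 => i iA; rewrite invr_ge0 ltW ?f_gt0.
exists (1 + \sum_(i in A) (f i)^-1)^-1 => [|i iA]; first by rewrite invr_gt0; lra.
rewrite -[f i]invrK lef_pV2 ?posrE ?invr_gt0 ?f_gt0 //; last lra.
rewrite (bigD1 i) //= addrCA lerDl addr_ge0 // sumr_ge0 // => k /andP[kA _].
by rewrite invr_ge0 ltW ?f_gt0.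
Qed.

Section MultiplicativeWeights.
Variables (R : realType) (m n : nat) (J : {set 'I_m}) (c : 'I_m -> R)
  (a : 'I_m -> 'I_n -> R) (K lam : R).
Hypotheses (K_gt0 : 0 < K) (lam_ge0 : 0 <= lam)
  (c_gt0 : forall i, i \in J -> 0 < c i)
  (a_ge0 : forall i j, i \in J -> 0 <= a i j)
  (c_a_le1 : forall i j, i \in J -> c i * a i j <= 1)
  (light_row : forall pi : 'I_n -> R, (forall j, 0 < pi j) ->
     exists2 i, i \in J & K * \sum_j pi j * a i j < \sum_j pi j).

Implicit Type k : 'I_m -> nat.

Definition mw_cost k := \sum_i (k i)%:R * c i.
Definition mw_load k j := \sum_i (k i)%:R * (c i * a i j).
Definition mw_potential k := \sum_j expR (lam * mw_load k j).
Definition mw_rate := (expR lam - 1) / K.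
Definition mw_invariant k := (forall i, k i != 0%N -> i \in J) /\
  mw_potential k <= n%:R * expR (mw_rate * mw_cost k).
Definition incr k i0 i := (k i + (i == i0))%N.

Lemma mw_rate_ge0 : 0 <= mw_rate.
Proof. by apply: divr_ge0 _ (ltW K_gt0); rewrite subr_ge0 -expR0 ler_expR. Qed.

Lemma sum_incr (f : 'I_m -> R) k i0 :
  \sum_i (incr k i0 i)%:R * f i = \sum_i (k i)%:R * f i + f i0.
Proof.
under eq_bigr => i _ do rewrite natrD mulrDl.
rewrite big_split /=; congr (_ + _).
by rewrite (bigD1 i0) //= eqxx mul1r big1 ?addr0 // => i /negbTE ->; rewrite mul0r.
Qed.

Lemma mw_invariant0 : mw_invariant (fun=> 0%N).
Proof.
have sum0 (f : 'I_m -> R) : \sum_i (0%N)%:R * f i = 0.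
  by apply: big1 => i _; rewrite mul0r.
split=> //; rewrite /mw_potential /mw_load /mw_cost sum0 mulr0 expR0 mulr1.
under eq_bigr => j _ do rewrite sum0 mulr0 expR0.
by rewrite sumr_const card_ord.
Qed.

Lemma mw_potential_incr k i0 : i0 \in J ->
  K * \sum_j expR (lam * mw_load k j) * a i0 j < mw_potential k ->
  mw_potential (incr k i0) <= mw_potential k * (1 + mw_rate * c i0).
Proof.
move=> i0J light.
have step j : expR (lam * mw_load (incr k i0) j) <=
    expR (lam * mw_load k j) * (1 + (expR lam - 1) * (c i0 * a i0 j)).
  rewrite /mw_load sum_incr mulrDr expRD ler_wpM2l ?expR_ge0 // mulrC.
  by rewrite expR_le_chord ?c_a_le1 // mulr_ge0 ?a_ge0 // ltW ?c_gt0.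
apply: le_trans (ler_sum _ (fun j _ => step j)) _.
have -> : \sum_j expR (lam * mw_load k j) * (1 + (expR lam - 1) * (c i0 * a i0 j)) =
    mw_potential k + (expR lam - 1) * c i0 * \sum_j expR (lam * mw_load k j) * a i0 j.
  by rewrite /mw_potential mulr_sumr -big_split /=; apply: eq_bigr => j _; ring.
rewrite mulrDr mulr1 lerD2l.
have -> : mw_potential k * (mw_rate * c i0) = (expR lam - 1) * c i0 * (mw_potential k / K).
  by rewrite /mw_rate; ring.
have e_ge0 : 0 <= expR lam - 1 by rewrite subr_ge0 -expR0 ler_expR.
have c_ge0 := ltW (c_gt0 i0J).
by rewrite ler_wpM2l ?mulr_ge0 // ler_pdivlMr // [_ * K]mulrC ltW.
Qed.

Lemma mw_invariant_incr k : mw_invariant k ->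
  exists2 i0, i0 \in J & mw_invariant (incr k i0).
Proof.
move=> [k_supp k_pot].
have [i0 i0J light] := light_row (fun j => expR_gt0 (lam * mw_load k j)).
exists i0 => //; split=> [i|].
  rewrite /incr /=; case: (eqVneq i i0) => [-> _ //|_]; rewrite addn0; exact: k_supp.
apply: le_trans (mw_potential_incr i0J light) _.
rewrite /mw_cost sum_incr [mw_rate * (_ + _)]mulrDr expRD mulrA ler_pM ?expR_ge1Dx //.
- by apply: sumr_ge0 => j _; exact: expR_ge0.
- by rewrite addr_ge0 // mulr_ge0 ?mw_rate_ge0 // ltW ?c_gt0.
Qed.

Lemma mw_greedy g : (forall i, i \in J -> c i <= g) ->
  exists k, mw_invariant k /\ K - g < mw_cost k <= K.
Proof.
move=> c_le_g; have [eps eps_gt0 eps_le_c] := exists_lbound_gt0 c_gt0.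
(* Each greedy step adds at least eps to the cost, which never exceeds K. *)
suff grow N : exists k, [/\ mw_invariant k, mw_cost k <= K &
    K - g < mw_cost k \/ N%:R * eps <= mw_cost k].
  have [k [k_inv k_le [k_gt|N_le]]] := grow (Num.truncn (K / eps)).+1.
    by exists k; rewrite k_gt k_le.
  have := truncnS_gt (K / eps); rewrite ltr_pdivrMr // => K_lt; lra.
elim: N => [|N [k [k_inv k_le [k_gt|N_le]]]].
- exists (fun=> 0%N); split; [exact: mw_invariant0| |right].
    by rewrite /mw_cost big1 ?ltW // => i _; rewrite mul0r.
  by rewrite mul0r /mw_cost big1 // => i _; rewrite mul0r.
- by exists k; split=> //; left.
- have [k_gt|k_room] := ltP (K - g) (mw_cost k); first by exists k; split=> //; left.
  have [i0 i0J incr_inv] := mw_invariant_incr k_inv.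
  have := eps_le_c i0 i0J; have := c_le_g i0 i0J.
  exists (incr k i0); split=> //; rewrite /mw_cost sum_incr -/(mw_cost k); first lra.
  by right; rewrite -addn1 natrD mulrDl mul1r; lra.
Qed.

Lemma mw_load_le k j : mw_invariant k ->
  lam * mw_load k j <= ln n%:R + mw_rate * mw_cost k.
Proof.
move=> [_ k_pot]; have n_gt0 : (0 : R) < n%:R by rewrite ltr0n (leq_ltn_trans _ (ltn_ord j)).
rewrite -ler_expR expRD lnK ?posrE //; apply: le_trans k_pot.
by rewrite /mw_potential (bigD1 j) //= lerDl sumr_ge0 // => *; exact: expR_ge0.
Qed.

End MultiplicativeWeights.

Section CoveringLP.
Variables (R : realType) (m n : nat) (B : 'M[R]_(m, n)) (d : 'cV[R]_n).

Definition lp_cost (y : 'cV[R]_n) : R := \sum_j d j 0 * y j 0.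
Definition lp_cover (y : 'cV[R]_n) i : R := \sum_j B i j * y j 0.

Lemma lpval_le_cost (h : 'cV[R]_m) (y : 'cV[R]_n) :
  (forall j, 0 <= y j 0) -> (forall i, h i 0 <= lp_cover y i) ->
  (lpval B d h <= (lp_cost y)%:E)%E.
Proof.
move=> y_ge0 y_cov; apply: ereal_inf_lbound; exists y.
  by split=> // i; rewrite mxE; exact: y_cov.
by rewrite !mxE; congr _%:E; apply: eq_bigr => j _; rewrite mxE.
Qed.

Lemma lpval_ge (h : 'cV[R]_m) (M : \bar R) :
  (forall y : 'cV[R]_n, (forall j, 0 <= y j 0) ->
     (forall i, h i 0 <= lp_cover y i) -> (M <= (lp_cost y)%:E)%E) ->
  (M <= lpval B d h)%E.
Proof.
move=> M_le; apply: le_ereal_inf_tmp => _ [y [y_ge0 y_cov] <-].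
have -> : (d^T *m y) 0 0 = lp_cost y.
  by rewrite !mxE; apply: eq_bigr => j _; rewrite mxE.
by apply: M_le => // i; have := y_cov i; rewrite mxE.
Qed.

Lemma lpval_ge_dual (h : 'cV[R]_m) (u : 'I_m -> R) :
  (forall i, 0 <= u i) -> (forall j, \sum_i u i * B i j <= d j 0) ->
  ((\sum_i u i * h i 0)%:E <= lpval B d h)%E.
Proof.
move=> u_ge0 u_dual; apply: lpval_ge => y y_ge0 y_cov; rewrite lee_fin.
have -> : lp_cost y = \sum_j y j 0 * d j 0.
  by apply: eq_bigr => j _; rewrite mulrC.
apply: (le_trans (y := \sum_i u i * lp_cover y i)).
  by apply: ler_sum => i _; rewrite ler_wpM2l.
rewrite /lp_cover; under eq_bigr => i _ do rewrite mulr_sumr.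
rewrite exchange_big /=; apply: ler_sum => j _.
under eq_bigr => i _ do rewrite mulrA mulrC.
by rewrite -mulr_sumr ler_wpM2l.
Qed.

Lemma ebasisE (i a : 'I_m) : ebasis R i a 0 = (a == i)%:R.
Proof. by rewrite mxE eqxx andbT. Qed.

Lemma sum_ebasisE (W : {set 'I_m}) a : (\sum_(i in W) ebasis R i) a 0 = (a \in W)%:R.
Proof.
rewrite summxE (eq_bigr (fun i => (a == i)%:R)) => [|i _]; last exact: ebasisE.
have [aW|aNW] := boolP (a \in W); last first.
  by rewrite big1 // => i iW; case: eqP => // ai; rewrite ai iW in aNW.
rewrite (bigD1 a) //= eqxx big1 ?addr0 // => i /andP[_ /negbTE].
by rewrite eq_sym => ->.
Qed.

Hypothesis B_ge0 : forall i j, 0 <= B i j.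

Lemma lpval_ebasis_le i j : 0 < B i j -> (lpval B d (ebasis R i) <= (d j 0 / B i j)%:E)%E.
Proof.
move=> Bij_gt0; pose y : 'cV[R]_n := (B i j)^-1 *: delta_mx j 0.
apply: ereal_inf_lbound; exists y; last first.
  by rewrite /y -scalemxAr -colE !mxE mulrC.
split=> [k|a]; first by rewrite !mxE mulr_ge0 ?invr_ge0 // ltW.
rewrite ebasisE /y -scalemxAr -colE !mxE; case: eqP => [->|_].
  by rewrite mulVf ?gt_eqF.
by rewrite mulr_ge0 ?invr_ge0 // ltW.
Qed.

Hypothesis d_ge0 : forall j, 0 <= d j 0.

Lemma lpvalset_gt_light_row (J : {set 'I_m}) (K : R) (pi : 'I_n -> R) :
  (0 < n)%N -> 0 <= K -> (forall j, 0 < pi j) -> (K%:E < lpvalset B d J)%E ->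
  exists2 i, i \in J & K * \sum_j pi j * (B i j / d j 0) < \sum_j pi j.
Proof.
move=> n_gt0 K_ge0 pi_gt0 zJ_gt; apply: contrapT => no_light.
set P := \sum_j pi j in no_light.
have P_gt0 : 0 < P.
  rewrite /P (bigD1 (Ordinal n_gt0)) //= ltr_pwDl //.
  by apply: sumr_ge0 => j _; exact: ltW.
pose y : 'cV[R]_n := \col_j (K / P * (pi j / d j 0)).
have y_ge0 j : 0 <= y j 0.
  by rewrite mxE !mulr_ge0 ?invr_ge0 // ltW.
have cost_le : lp_cost y <= K.
  have -> : K = \sum_j K / P * pi j by rewrite -mulr_sumr divfK ?gt_eqF.
  apply: ler_sum => j _; rewrite mxE.
  have [->|dj_neq0] := eqVneq (d j 0) 0; first by rewrite mul0r mulr_ge0 ?divr_ge0 // ltW.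
  by rewrite mulrCA [d j 0 * _]mulrCA mulfV // mulr1.
have y_cov i : (\sum_(k in J) ebasis R k) i 0 <= lp_cover y i.
  rewrite sum_ebasisE; have [iJ|_] := boolP (i \in J); last first.
    by apply: sumr_ge0 => j _; rewrite mulr_ge0.
  have : P <= K * \sum_j pi j * (B i j / d j 0).
    by rewrite leNgt; apply/negP => lt; apply: no_light; exists i.
  have -> : lp_cover y i = K / P * \sum_j pi j * (B i j / d j 0).
    by rewrite /lp_cover mulr_sumr; apply: eq_bigr => j _; rewrite mxE; ring.
  by rewrite mulrAC ler_pdivlMr // mul1r.
have := le_trans (lpval_le_cost y_ge0 y_cov) (cost_le : (lp_cost y)%:E <= K%:E)%E.
by rewrite leNgt zJ_gt.
Qed.

End CoveringLP.

Section RoundingBound.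
Variables (R : realType) (m n : nat) (B : 'M[R]_(m, n)) (d : 'cV[R]_n)
  (J : {set 'I_m}) (g : R) (w : 'I_m -> R).
Hypotheses (n_gt2 : (2 < n)%N) (B_ge0 : forall i j, 0 <= B i j)
  (d_ge0 : forall j, 0 <= d j 0) (g_gt0 : 0 < g)
  (w_itv : forall i, i \in J -> 0 < w i <= 1).

Local Notation l := (@ln R n%:R).
Local Notation L := (l / ln l).
Local Notation K := (4 * g * L).

Hypotheses
  (single_heavy : forall i, i \in J ->
     (K%:E < lpval B d (ebasis R i) * ((w i)^-1)%:E)%E)
  (light_cheap : forall W : {set 'I_m}, W \subset J ->
     \sum_(i in W) w i <= 1 -> (lpvalset B d W <= g%:E)%E).

Let l_gt1 : 1 < l.
Proof. exact: ln_nat_gt1. Qed.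

Let lam_ge1 : 1 <= ln L.
Proof. exact: ln_div_ln_ge1. Qed.

Let L_gt0 : 0 < L.
Proof. by apply: divr_gt0; [exact: lt_trans ltr01 l_gt1 | exact: ln_gt0]. Qed.

Let L_ge1 : 1 <= L.
Proof.
by rewrite -(lnK L_gt0) (le_trans _ (expR_ge1Dx _)) // lerDl (le_trans ler01 lam_ge1).
Qed.

Let K_gt0 : 0 < K.
Proof. by rewrite mulr_gt0 // mulr_gt0 ?ltr0n. Qed.

Let g_le_K : g <= K.
Proof.
rewrite mulrAC ler_peMl ?(ltW g_gt0) // (le_trans L_ge1) //.
by rewrite ler_peMl ?(ltW L_gt0) ?ler1n.
Qed.

Let c i := fine (lpval B d (ebasis R i)).
(* [Bd i j] is 0 when [d j 0 = 0], and then [c i * B i j = 0] too (c_mulB_eq). *)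
Let Bd i j := B i j / d j 0.

Lemma lpval_ebasis_bounded i : i \in J ->
  lpval B d (ebasis R i) = (c i)%:E /\ K * w i < c i <= g.
Proof.
move=> iJ; have /andP[w_gt0 w_le1] := w_itv iJ.
have : (lpval B d (ebasis R i) <= g%:E)%E.
  by have := @light_cheap [set i]; rewrite /lpvalset !big_set1 finset.sub1set; apply.
move: (single_heavy iJ); rewrite /c; case: (lpval _ _ _) => [r | // |] /=; last first.
  by rewrite gt0_mulNye ?lte_fin ?invr_gt0 // ltNge leNye.
rewrite -EFinM lte_fin lee_fin => Kw_lt r_le; split=> //.
by rewrite r_le andbT -ltr_pdivlMr.
Qed.

Lemma c_gt0 i : i \in J -> 0 < c i.
Proof.
move=> iJ; have [_ /andP[Kw_lt _]] := lpval_ebasis_bounded iJ.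
by apply: le_lt_trans Kw_lt; rewrite mulr_ge0 ?ltW //; case/andP: (w_itv iJ).
Qed.

Lemma c_le_g i : i \in J -> c i <= g.
Proof. by case/lpval_ebasis_bounded => _ /andP[]. Qed.

Lemma c_mulB_le i j : i \in J -> c i * B i j <= d j 0.
Proof.
move=> iJ; have [Bij_eq0|Bij_neq0] := eqVneq (B i j) 0; first by rewrite Bij_eq0 mulr0.
have Bij_gt0 : 0 < B i j by rewrite lt_neqAle eq_sym Bij_neq0 B_ge0.
have := lpval_ebasis_le d B_ge0 Bij_gt0; rewrite (lpval_ebasis_bounded iJ).1 lee_fin.
by rewrite ler_pdivlMr.
Qed.

Lemma Bd_ge0 i j : 0 <= Bd i j.
Proof. by rewrite divr_ge0. Qed.

Lemma c_Bd_le1 i j : i \in J -> c i * Bd i j <= 1.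
Proof.
move=> iJ; have [dj_eq0|dj_neq0] := eqVneq (d j 0) 0.
  by rewrite /Bd dj_eq0 invr0 !mulr0.
by rewrite /Bd mulrA ler_pdivrMr ?mul1r ?c_mulB_le // lt_neqAle eq_sym dj_neq0 d_ge0.
Qed.

Lemma c_mulB_eq i j : i \in J -> c i * B i j = d j 0 * (c i * Bd i j).
Proof.
move=> iJ; have [dj_eq0|dj_neq0] := eqVneq (d j 0) 0; last by rewrite /Bd; field.
have := c_mulB_le j iJ; rewrite dj_eq0 mul0r => cB_le0.
by apply/eqP; rewrite eq_le cB_le0 mulr_ge0 // ltW ?c_gt0.
Qed.

Section Support.
Variable k : 'I_m -> nat.
Hypothesis k_supp : forall i, k i != 0%N -> i \in J.

Let W := [set i | k i != 0%N].

Lemma support_sub : W \subset J.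
Proof. by apply/fintype.subsetP => i; rewrite inE; exact: k_supp. Qed.

Lemma sum_support (f : 'I_m -> R) : \sum_(i in W) (k i)%:R * f i = \sum_i (k i)%:R * f i.
Proof.
rewrite big_mkcond; apply: eq_bigr => i _; rewrite inE.
by case: eqP => // ->; rewrite mul0r.
Qed.

Lemma support_weight_le1 : mw_cost c k <= K -> \sum_(i in W) w i <= 1.
Proof.
move=> C_le; apply: le_trans (_ : \sum_(i in W) (k i)%:R * (c i / K) <= 1).
  apply: ler_sum => i iW; have iJ := fintype.subsetP support_sub i iW.
  have [_ /andP[Kw_lt _]] := lpval_ebasis_bounded iJ.
  have k_ge1 : (1 : R) <= (k i)%:R by rewrite ler1n lt0n; rewrite inE in iW.
  have w_le : w i <= c i / K by rewrite ler_pdivlMr // mulrC ltW.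
  have /andP[w_gt0 _] := w_itv iJ; nra.
rewrite sum_support (eq_bigr (fun i => (k i)%:R * c i / K)) => [|i _]; last exact: mulrA.
by rewrite -mulr_suml ler_pdivrMr // mul1r.
Qed.

Lemma lpvalset_support_ge M : 0 < M -> (forall j, mw_load c Bd k j <= M) ->
  ((mw_cost c k / M)%:E <= lpvalset B d W)%E.
Proof.
move=> M_gt0 load_le; pose u i := (k i)%:R * c i / M.
have u_ge0 i : 0 <= u i.
  rewrite /u; have [->|/k_supp iJ] := eqVneq (k i) 0%N; first by rewrite !mul0r.
  by rewrite divr_ge0 ?mulr_ge0 ?(ltW (c_gt0 iJ)) ?(ltW M_gt0).
have u_dual j : \sum_i u i * B i j <= d j 0.
  have -> : \sum_i u i * B i j = d j 0 * mw_load c Bd k j / M.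
    rewrite /mw_load mulr_sumr mulr_suml; apply: eq_bigr => i _.
    rewrite /u; have [->|/k_supp iJ] := eqVneq (k i) 0%N; first by rewrite !mul0r mulr0 mul0r.
    by rewrite mulrAC -(mulrA _ (c i)) c_mulB_eq //; ring.
  by rewrite ler_pdivrMr // ler_wpM2l.
apply: le_trans (lpval_ge_dual _ u_ge0 u_dual); rewrite lee_fin le_eqVlt; apply/orP; left.
rewrite /mw_cost mulr_suml; apply/eqP/eq_bigr => i _; rewrite sum_ebasisE inE.
by rewrite /u; have [->|_] := eqVneq (k i) 0%N; rewrite /= ?mul0r ?mulr0 ?mulr1.
Qed.

End Support.

Lemma lpvalset_le_rounding_bound : (lpvalset B d J <= K%:E)%E.
Proof.
rewrite leNgt; apply/negP => J_heavy.
have light_row pi : (forall j, 0 < pi j) ->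
    exists2 i, i \in J & K * \sum_j pi j * Bd i j < \sum_j pi j.
  move=> pi_gt0; apply: lpvalset_gt_light_row J_heavy => //; last exact: ltW.
  exact: ltn_trans n_gt2.
have lam_ge0 : 0 <= ln L by apply: le_trans lam_ge1.
have [k [k_inv /andP[C_gt C_le]]] :=
  mw_greedy K_gt0 lam_ge0 c_gt0 (fun i j _ => Bd_ge0 i j) c_Bd_le1 light_row c_le_g.
have k_supp := k_inv.1; set C := mw_cost c k in C_gt C_le.
pose M := (l + mw_rate K (ln L) * C) / ln L.
have lam_gt0 : 0 < ln L by apply: lt_le_trans lam_ge1.
have M_gt0 : 0 < M.
  rewrite /M divr_gt0 // ltr_wpDr ?(lt_trans ltr01 l_gt1) // mulr_ge0 ?mw_rate_ge0 //.
  by rewrite (le_trans _ (ltW C_gt)) // subr_ge0.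
have load_le j : mw_load c Bd k j <= M by rewrite /M ler_pdivlMr // mulrC (mw_load_le j k_inv).
have gap : g * M < C.
  rewrite /M mulrA ltr_pdivrMr // [C * _]mulrC /mw_rate lnK ?posrE //.
  exact: rounding_gap (ln_div_ln_mul_ge l_gt1) C_gt C_le.
have := light_cheap (support_sub k_supp) (support_weight_le1 k_supp C_le).
rewrite leNgt => /negP; apply; apply: lt_le_trans (lpvalset_support_ge k_supp M_gt0 load_le).
by rewrite lte_fin ltr_pdivlMr // mulrC.
Qed.

End RoundingBound.

Theorem lemma4 (R : realType) (m n : nat) (B : 'M[R]_(m, n)) (d : 'cV[R]_n)
  (J : {set 'I_m})
  (hn : (2 < n)%N)
  (hB : forall i j, 0 <= B i j) (hd : forall j, 0 <= d j 0)
  (g : R) (w : 'I_m -> R)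
  (hg : 0 < g)
  (hw : forall i, i \in J -> 0 < w i <= 1)
  (h1 : forall i, i \in J ->
        (lpval B d (ebasis R i) * ((w i)^-1)%:E >
         (4 * g * (ln n%:R / ln (ln n%:R)))%:E)%E)
  (h2 : forall W : {set 'I_m}, W \subset J ->
        \sum_(i in W) w i <= 1 -> (lpvalset B d W <= g%:E)%E) :
  (lpvalset B d J <= (4 * g * (ln n%:R / ln (ln n%:R)))%:E)%E.
Proof. exact: lpvalset_le_rounding_bound hn hB hd hg hw h1 h2. Qed.
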